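(* Let $\Omega_2=\{(x,y)\in\mathbb{R}^2: x\neq0,\ y<x^{-2}\sin(x^2)\}\cup\{(0,y):y<1\}$. Then $\Omega_2$ is a $C^\infty$ domain which has a uniformly $C^2$ defining function (in particular $\partial\Omega_2$ has positive reach), but $\Omega_2$ has no uniformly $C^3$ defining function.
   Context: A $C^m$ defining function for an open set $\Omega\subset\mathbb{R}^n$ is a real-valued $C^m$ function $\rho$ on an open neighborhood $U$ of $\partial\Omega$ with $\{x\in U:\rho<0\}=\Omega\cap U$ and $\nabla\rho\neq0$ on $\partial\Omega$. It is uniformly $C^m$ if $\operatorname{dist}(\partial\Omega,\partial U)>0$, $\sup_{U}\sum_{|\alpha|\le m}|\partial^\alpha\rho|<\infty$, and $\inf_U|\nabla\rho|>0$. Reach: with $\operatorname{Unp}(\partial\Omega)$ the set of points having a unique nearest point in $\partial\Omega$, $\operatorname{reach}(\partial\Omega)=\inf_{y\in\partial\Omega}\sup\{r\ge0:B(y,r)\subset\operatorname{Unp}(\partial\Omega)\}$. *)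

From Stdlib Require Import Reals.
Open Scope R_scope.

Definition pt : Type := (R * R)%type.

Definition dist (p q : pt) : R :=
  sqrt ((fst p - fst q) ^ 2 + (snd p - snd q) ^ 2).

Definition open_set (U : pt -> Prop) : Prop :=
  forall p, U p -> exists e, 0 < e /\ forall q, dist p q < e -> U q.

Definition connected (S : pt -> Prop) : Prop :=
  forall A B : pt -> Prop, open_set A -> open_set B ->
    (forall p, S p -> A p \/ B p) ->
    (forall p, S p -> A p -> B p -> False) ->
    (forall p, S p -> ~ A p) \/ (forall p, S p -> ~ B p).

Definition domain (S : pt -> Prop) : Prop :=
  open_set S /\ connected S /\ exists p, S p.

Definition boundary (S : pt -> Prop) (p : pt) : Prop :=
  forall e, 0 < e ->
    (exists q, S q /\ dist p q < e) /\ (exists q, ~ S q /\ dist p q < e).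

Definition continuous_on (U : pt -> Prop) (f : pt -> R) : Prop :=
  forall p, U p -> forall eps, 0 < eps -> exists delta, 0 < delta /\
    forall q, U q -> dist p q < delta -> Rabs (f q - f p) < eps.

Definition bounded_on (U : pt -> Prop) (f : pt -> R) : Prop :=
  exists M, forall p, U p -> Rabs (f p) <= M.

Definition partial_x (f : pt -> R) (p : pt) (l : R) : Prop :=
  derivable_pt_lim (fun t => f (t, snd p)) (fst p) l.
Definition partial_y (f : pt -> R) (p : pt) (l : R) : Prop :=
  derivable_pt_lim (fun t => f (fst p, t)) (snd p) l.

(* CmB b m U f : f is C^m on U (all partial derivatives of order <= m exist
   and are continuous on U); if b = true, moreover all of them are bounded
   on U. *)
Fixpoint CmB (b : bool) (m : nat) (U : pt -> Prop) (f : pt -> R) : Prop :=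
  continuous_on U f /\ (b = true -> bounded_on U f) /\
  match m with
  | O => True
  | S k => exists fx fy : pt -> R,
      (forall p, U p -> partial_x f p (fx p) /\ partial_y f p (fy p)) /\
      CmB b k U fx /\ CmB b k U fy
  end.

Definition Cm (m : nat) (U : pt -> Prop) (f : pt -> R) : Prop := CmB false m U f.
Definition Cinf (U : pt -> Prop) (f : pt -> R) : Prop := forall m, Cm m U f.

Definition defining_fun (reg : (pt -> Prop) -> (pt -> R) -> Prop)
    (Om U : pt -> Prop) (rho : pt -> R) : Prop :=
  open_set U /\ (forall p, boundary Om p -> U p) /\ reg U rho /\
  (forall p, U p -> (rho p < 0 <-> Om p)) /\
  (forall p, boundary Om p -> exists gx gy,
      partial_x rho p gx /\ partial_y rho p gy /\ (gx <> 0 \/ gy <> 0)).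

Definition uniform_defining_fun (m : nat) (Om U : pt -> Prop) (rho : pt -> R) : Prop :=
  defining_fun (Cm m) Om U rho /\
  (exists d, 0 < d /\ forall p q, boundary Om p -> boundary U q -> d <= dist p q) /\
  CmB true m U rho /\
  (exists c, 0 < c /\ forall p gx gy, U p -> partial_x rho p gx -> partial_y rho p gy ->
      c <= sqrt (gx ^ 2 + gy ^ 2)).

Definition Unp (S : pt -> Prop) (x : pt) : Prop :=
  exists! y, S y /\ forall z, S z -> dist x y <= dist x z.

(* reach(S) > 0, i.e. inf_{y in S} sup {r >= 0 : B(y,r) ⊂ Unp(S)} > 0 *)
Definition positive_reach (S : pt -> Prop) : Prop :=
  exists r, 0 < r /\ forall y, S y -> forall x, dist y x < r -> Unp S x.

Definition Omega2 (p : pt) : Prop :=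
  (fst p <> 0 /\ snd p < sin (fst p ^ 2) / fst p ^ 2) \/
  (fst p = 0 /\ snd p < 1).

(* Omega2 is the strict subgraph { y < g(x) } of the smooth profile
   g(x) = sum_k sin_n k * x^(4k), which equals sin(x^2)/x^2 for x <> 0 and
   1 at x = 0.  Every claim of the theorem is an instance of a general fact
   about the subgraph Om of a function h of one variable:
   - if h is continuous and bounded below, Om is a domain whose boundary is
     the graph of h (three segments join any two points of Om);
   - rho(x, y) = y - h(x) is a C^oo defining function when h is smooth, and
     a uniformly C^m one on the strip |y - h(x)| < 1 when h, ..., h^(m) are
     bounded (m >= 1);
   - if |h'|, |h''| <= M, the graph has positive reach: near the graph the
     squared distance to (t, h t) is strictly convex in t, so nearest
     points exist and are unique;
   - if |h'|, |h''| <= M and Om has a uniformly C^3 defining function, then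
     differentiating rho(t, h t) = 0 twice writes h'' = -(A' + B' h') / B
     with A, B, A', B' bounded with bounded derivatives and B^2 bounded
     below, so h'' is Lipschitz.
   For the profile g, g'' rises by at least 2 between x = sqrt(pi/2 + 2k pi)
   and x = sqrt(3pi/2 + 2k pi), points at distance O(1/sqrt k), so g'' is
   not Lipschitz. *)

From Coquelicot Require Import Coquelicot Derive_2d.
From Stdlib Require Import Reals Lra FunctionalExtensionality Classical.
Open Scope R_scope.

Lemma is_derive_R_const (c x : R) : is_derive (fun _ : R => c) x 0.
Proof. exact (@is_derive_const R_AbsRing R_NormedModule c x). Qed.

Lemma is_derive_R_id (x : R) : is_derive (fun t : R => t) x 1.
Proof. exact (@is_derive_id R_AbsRing x). Qed.

Lemma is_derive_R_plus (f g : R -> R) x a b : is_derive f x a -> is_derive g x b ->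
  is_derive (fun t => f t + g t) x (a + b).
Proof. intros Hf Hg. exact (is_derive_plus f g x a b Hf Hg). Qed.

Lemma is_derive_R_mult (f g : R -> R) x a b : is_derive f x a -> is_derive g x b ->
  is_derive (fun t => f t * g t) x (a * g x + f x * b).
Proof. intros Hf Hg. exact (is_derive_mult f g x a b Hf Hg Rmult_comm). Qed.

Lemma is_derive_R_comp (f g : R -> R) x a b : is_derive f (g x) a -> is_derive g x b ->
  is_derive (fun t => f (g t)) x (b * a).
Proof. intros Hf Hg. exact (is_derive_comp f g x a b Hf Hg). Qed.

Lemma is_derive_continuity_pt (f : R -> R) x l :
  is_derive f x l -> continuity_pt f x.
Proof.
  intro H. apply is_derive_Reals in H.
  exact (derivable_continuous_pt f x (exist _ l H)).
Qed.

(* The epsilon-delta form of continuity, without the exclusion of x itself. *)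
Lemma continuity_pt_eps (f : R -> R) x : continuity_pt f x -> forall eps, 0 < eps ->
  exists d, 0 < d /\ forall t, Rabs (t - x) < d -> Rabs (f t - f x) < eps.
Proof.
  intros H eps Heps. destruct (H eps Heps) as [d [Hd Hx]]. exists d. split; auto.
  intros t Ht. destruct (Req_dec t x) as [->|E].
  - rewrite Rminus_diag, Rabs_R0; auto.
  - apply (Hx t). split; [split; [exact I | auto] | exact Ht].
Qed.

Lemma lipschitz_of_derive_bound (f f' : R -> R) K :
  (forall x, is_derive f x (f' x)) -> (forall x, Rabs (f' x) <= K) ->
  forall a b, Rabs (f a - f b) <= K * Rabs (a - b).
Proof.
  intros Hd HK a b. destruct (MVT_gen f b a f') as [c [_ Hc]].
  - intros; auto.
  - intros; eapply is_derive_continuity_pt; eauto.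
  - rewrite Hc, Rabs_mult. apply Rmult_le_compat_r; [apply Rabs_pos | auto].
Qed.

Lemma derive_zero_at_minimum (f : R -> R) c l :
  is_derive f c l -> (forall t, f c <= f t) -> l = 0.
Proof.
  intros H Hm. apply is_derive_Reals in H.
  apply (deriv_minimum f (c - 1) (c + 1) c (exist _ l H)); try lra. intros; auto.
Qed.

Lemma derive_unique (f : R -> R) x a b :
  derivable_pt_lim f x a -> derivable_pt_lim f x b -> a = b.
Proof.
  intros Ha Hb. apply is_derive_Reals, is_derive_unique in Ha.
  apply is_derive_Reals, is_derive_unique in Hb. congruence.
Qed.

(* A continuous function that is bounded for |x| >= 1 is bounded:
   on [-1, 1] it attains a maximum and a minimum. *)
Lemma bounded_of_bounded_at_infinity (f : R -> R) K :
  (forall x, continuity_pt f x) -> (forall x, 1 <= Rabs x -> Rabs (f x) <= K) ->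
  exists M, forall x, Rabs (f x) <= M.
Proof.
  intros Hc HK.
  destruct (continuity_ab_maj f (-1) 1) as [a [Ha _]]; [lra | intros; auto |].
  destruct (continuity_ab_min f (-1) 1) as [b [Hb _]]; [lra | intros; auto |].
  exists (Rmax K (Rmax (Rabs (f a)) (Rabs (f b)))). intro x.
  pose proof (Rmax_l K (Rmax (Rabs (f a)) (Rabs (f b)))) as HK'.
  pose proof (Rmax_r K (Rmax (Rabs (f a)) (Rabs (f b)))) as Hab.
  pose proof (Rmax_l (Rabs (f a)) (Rabs (f b))). pose proof (Rmax_r (Rabs (f a)) (Rabs (f b))).
  destruct (Rle_dec 1 (Rabs x)) as [Hx1|Hx1].
  - specialize (HK x Hx1). lra.
  - assert (Hx : -1 <= x <= 1) by (apply Rabs_le_between; lra).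
    specialize (Ha x Hx). specialize (Hb x Hx).
    pose proof (Rle_abs (f a)). pose proof (Rle_abs (- f b)). rewrite Rabs_Ropp in *.
    apply Rabs_le. lra.
Qed.

(* Functions with a bounded derivative and bounded themselves: the class
   used to show that h'' is Lipschitz in the C^3 obstruction. *)
Definition C1_bounded (f : R -> R) : Prop :=
  exists (f' : R -> R) (K : R), (forall t, is_derive f t (f' t)) /\
    (forall t, Rabs (f t) <= K) /\ (forall t, Rabs (f' t) <= K).

Lemma C1_bounded_const c : C1_bounded (fun _ => c).
Proof.
  exists (fun _ => 0), (Rabs c). split; [|split]; intro t.
  - apply is_derive_R_const.
  - apply Rle_refl.
  - rewrite Rabs_R0. apply Rabs_pos.
Qed.

Lemma C1_bounded_plus f h : C1_bounded f -> C1_bounded h -> C1_bounded (fun t => f t + h t).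
Proof.
  intros [f' [K1 [Hd1 [Hb1 Hc1]]]] [h' [K2 [Hd2 [Hb2 Hc2]]]].
  exists (fun t => f' t + h' t), (K1 + K2). split; [|split]; intro t.
  - apply is_derive_R_plus; auto.
  - eapply Rle_trans; [apply Rabs_triang|]. specialize (Hb1 t); specialize (Hb2 t); lra.
  - eapply Rle_trans; [apply Rabs_triang|]. specialize (Hc1 t); specialize (Hc2 t); lra.
Qed.

Lemma C1_bounded_mult f h : C1_bounded f -> C1_bounded h -> C1_bounded (fun t => f t * h t).
Proof.
  intros [f' [K1 [Hd1 [Hb1 Hc1]]]] [h' [K2 [Hd2 [Hb2 Hc2]]]].
  assert (0 <= K1) by (eapply Rle_trans; [apply Rabs_pos | apply (Hb1 0)]).
  assert (0 <= K2) by (eapply Rle_trans; [apply Rabs_pos | apply (Hb2 0)]).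
  exists (fun t => f' t * h t + f t * h' t), (K1 * K2 + K1 * K2). split; [|split]; intro t.
  - apply is_derive_R_mult; auto.
  - rewrite Rabs_mult. specialize (Hb1 t); specialize (Hb2 t).
    assert (Rabs (f t) * Rabs (h t) <= K1 * K2)
      by (apply Rmult_le_compat; auto; apply Rabs_pos).
    nra.
  - eapply Rle_trans; [apply Rabs_triang|]. rewrite !Rabs_mult.
    specialize (Hb1 t); specialize (Hb2 t); specialize (Hc1 t); specialize (Hc2 t).
    apply Rplus_le_compat; apply Rmult_le_compat; auto; apply Rabs_pos.
Qed.

Lemma C1_bounded_inv f b : 0 < b -> C1_bounded f -> (forall t, b <= f t ^ 2) ->
  C1_bounded (fun t => / f t).
Proof.
  intros Hb [f' [K [Hd [Hb1 Hc1]]]] Hl.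
  assert (Hnz : forall t, f t <> 0)
    by (intros t E; specialize (Hl t); rewrite E in Hl; simpl in Hl; lra).
  assert (Hinv : forall t, / Rabs (f t) <= 1 + / b).
  { intro t. assert (0 < / b) by (apply Rinv_0_lt_compat; auto).
    assert (Ha : 0 < Rabs (f t)) by (apply Rabs_pos_lt; auto).
    destruct (Rle_dec 1 (Rabs (f t))).
    - assert (/ Rabs (f t) <= 1) by (rewrite <- Rinv_1; apply Rinv_le_contravar; lra). lra.
    - assert (b <= Rabs (f t) * Rabs (f t))
        by (rewrite <- Rabs_mult, Rabs_right; specialize (Hl t); simpl in Hl; nra).
      assert (/ Rabs (f t) <= / b) by (apply Rinv_le_contravar; nra). lra. }
  exists (fun t => - f' t / f t ^ 2), (Rmax (1 + / b) (K / b)). split; [|split]; intro t.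
  - apply is_derive_inv; auto.
  - rewrite Rabs_inv. eapply Rle_trans; [apply Hinv | apply Rmax_l].
  - eapply Rle_trans; [| apply Rmax_r].
    unfold Rdiv. rewrite Rabs_mult, Rabs_Ropp, Rabs_inv, (Rabs_right (f t ^ 2))
      by (apply Rle_ge, pow2_ge_0).
    assert (0 < f t ^ 2) by (specialize (Hl t); lra).
    apply Rmult_le_compat; auto; [apply Rabs_pos | left; apply Rinv_0_lt_compat; lra |].
    apply Rinv_le_contravar; auto.
Qed.

Fixpoint derivable_n_times (n : nat) (f : R -> R) : Prop :=
  match n with
  | O => True
  | S k => exists f', (forall x, is_derive f x (f' x)) /\ derivable_n_times k f'
  end.

Definition smooth (f : R -> R) : Prop := forall n, derivable_n_times n f.

Lemma derivable_n_times_pred n f : derivable_n_times (S n) f -> derivable_n_times n f.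
Proof.
  revert f; induction n as [|n IH]; intros f [f' [Hf Hf']]; [exact I |].
  exists f'. split; auto.
Qed.

Lemma derivable_n_times_const n c : derivable_n_times n (fun _ => c).
Proof.
  revert c; induction n as [|n IH]; intro c; [exact I |].
  exists (fun _ => 0). split; [intro; apply is_derive_R_const | apply IH].
Qed.

Lemma derivable_n_times_id n : derivable_n_times n (fun t => t).
Proof.
  destruct n; [exact I |]. exists (fun _ => 1).
  split; [intro; apply is_derive_R_id | apply derivable_n_times_const].
Qed.

Lemma derivable_n_times_plus n f g :
  derivable_n_times n f -> derivable_n_times n g -> derivable_n_times n (fun t => f t + g t).
Proof.
  revert f g; induction n as [|n IH]; intros f g Hf Hg; [exact I |].
  destruct Hf as [f' [Hf1 Hf2]], Hg as [g' [Hg1 Hg2]].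
  exists (fun t => f' t + g' t). split; [intro; apply is_derive_R_plus; auto | auto].
Qed.

Lemma derivable_n_times_mult n f g :
  derivable_n_times n f -> derivable_n_times n g -> derivable_n_times n (fun t => f t * g t).
Proof.
  revert f g; induction n as [|n IH]; intros f g Hf Hg; [exact I |].
  pose proof (derivable_n_times_pred _ _ Hf). pose proof (derivable_n_times_pred _ _ Hg).
  destruct Hf as [f' [Hf1 Hf2]], Hg as [g' [Hg1 Hg2]].
  exists (fun t => f' t * g t + f t * g' t).
  split; [intro; apply is_derive_R_mult; auto | apply derivable_n_times_plus; auto].
Qed.

Lemma derivable_n_times_comp n f g :
  derivable_n_times n f -> derivable_n_times n g -> derivable_n_times n (fun t => f (g t)).
Proof.
  revert f g; induction n as [|n IH]; intros f g Hf Hg; [exact I |].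
  pose proof (derivable_n_times_pred _ _ Hg).
  destruct Hf as [f' [Hf1 Hf2]], Hg as [g' [Hg1 Hg2]].
  exists (fun t => g' t * f' (g t)).
  split; [intro; apply is_derive_R_comp; auto | apply derivable_n_times_mult; auto].
Qed.

Lemma smooth_PSeries a : CV_radius a = p_infty -> smooth (PSeries a).
Proof.
  intros Ha n. revert a Ha; induction n as [|n IH]; intros a Ha; [exact I |].
  exists (PSeries (PS_derive a)). split.
  - intro x. apply is_derive_PSeries. rewrite Ha. exact I.
  - apply IH. rewrite CV_radius_derive. auto.
Qed.

Lemma smooth_Derive f : smooth f ->
  (forall x, is_derive f x (Derive f x)) /\ smooth (Derive f).
Proof.
  intro Hf. split.
  - intro x. destruct (Hf 1%nat) as [f' [Hd _]]. apply Derive_correct. exists (f' x). auto.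
  - intro n. destruct (Hf (S n)) as [f' [Hd Hf']].
    replace (Derive f) with f'; auto.
    apply functional_extensionality. intro x. symmetry. apply is_derive_unique. auto.
Qed.

Lemma dist_fst_le p q : Rabs (fst p - fst q) <= dist p q.
Proof.
  unfold dist. rewrite <- sqrt_Rsqr_abs. apply sqrt_le_1_alt.
  unfold Rsqr. pose proof (pow2_ge_0 (snd p - snd q)). simpl. nra.
Qed.

Lemma dist_snd_le p q : Rabs (snd p - snd q) <= dist p q.
Proof.
  unfold dist. rewrite <- sqrt_Rsqr_abs. apply sqrt_le_1_alt.
  unfold Rsqr. pose proof (pow2_ge_0 (fst p - fst q)). simpl. nra.
Qed.

Lemma dist_le_sum p q : dist p q <= Rabs (fst p - fst q) + Rabs (snd p - snd q).
Proof.
  unfold dist.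
  pose proof (Rabs_pos (fst p - fst q)). pose proof (Rabs_pos (snd p - snd q)).
  rewrite <- (sqrt_pow2 (Rabs (fst p - fst q) + Rabs (snd p - snd q))) by lra.
  apply sqrt_le_1_alt.
  pose proof (pow2_abs (fst p - fst q)). pose proof (pow2_abs (snd p - snd q)). nra.
Qed.

Lemma dist_sym p q : dist p q = dist q p.
Proof. unfold dist. f_equal. ring. Qed.

Lemma dist_vertical p t : dist p (fst p, snd p + t) = Rabs t.
Proof. unfold dist; simpl. rewrite <- sqrt_Rsqr_abs. f_equal. unfold Rsqr. ring. Qed.

Definition segment (P Q : pt) (t : R) : pt :=
  (fst P + t * (fst Q - fst P), snd P + t * (snd Q - snd P)).

Lemma segment_open_preimage (A : pt -> Prop) P Q s : open_set A -> A (segment P Q s) ->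
  exists m, 0 < m /\ forall u, Rabs (u - s) < m -> A (segment P Q u).
Proof.
  intros HA Hs. destruct (HA _ Hs) as [e [He Hball]].
  set (L := Rabs (fst Q - fst P) + Rabs (snd Q - snd P) + 1).
  assert (HL : 0 < L)
    by (unfold L; pose proof (Rabs_pos (fst Q - fst P)); pose proof (Rabs_pos (snd Q - snd P)); lra).
  exists (e / L). split; [apply Rdiv_lt_0_compat; lra |]. intros u Hu. apply Hball.
  eapply Rle_lt_trans; [apply dist_le_sum |]. unfold segment; simpl.
  replace (fst P + s * (fst Q - fst P) - (fst P + u * (fst Q - fst P)))
    with ((s - u) * (fst Q - fst P)) by ring.
  replace (snd P + s * (snd Q - snd P) - (snd P + u * (snd Q - snd P)))
    with ((s - u) * (snd Q - snd P)) by ring.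
  rewrite !Rabs_mult, Rabs_minus_sym.
  apply Rle_lt_trans with (Rabs (u - s) * L); [unfold L; pose proof (Rabs_pos (u - s)); nra |].
  apply (Rmult_lt_compat_r L) in Hu; [| lra]. replace (e / L * L) with e in Hu by (field; lra).
  exact Hu.
Qed.

(* The proof
   takes the supremum s of the parameters up to which the segment stays
   in A and shows that s = 1. *)
Lemma segment_same_piece (X A B : pt -> Prop) P Q : open_set A -> open_set B ->
  (forall p, X p -> A p \/ B p) -> (forall p, X p -> A p -> B p -> False) ->
  (forall t, 0 <= t <= 1 -> X (segment P Q t)) -> A P -> A Q.
Proof.
  intros HA HB Hcov Hdis HS HP.
  assert (G0 : segment P Q 0 = P) by (unfold segment; destruct P; simpl; f_equal; ring).
  assert (G1 : segment P Q 1 = Q) by (unfold segment; destruct P, Q; simpl; f_equal; ring).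
  set (E := fun t => 0 <= t <= 1 /\ forall u, 0 <= u <= t -> A (segment P Q u)).
  assert (E0 : E 0)
    by (split; [lra | intros u Hu; replace u with 0 by lra; rewrite G0; auto]).
  destruct (completeness E) as [s [Hub Hlub]];
    [exists 1; intros t [Ht _]; lra | exists 0; exact E0 |].
  assert (Hs0 : 0 <= s) by (apply Hub, E0).
  assert (Hs1 : s <= 1) by (apply Hlub; intros t [Ht _]; lra).
  assert (Hbelow : forall u, 0 <= u < s -> A (segment P Q u)).
  { intros u Hu. apply NNPP. intro Nu. assert (s <= u); [| lra].
    apply Hlub. intros t [Ht Ht']. apply Rnot_lt_le. intro Hut. apply Nu, Ht'. lra. }
  destruct (Hcov _ (HS s (conj Hs0 Hs1))) as [As|Bs].
  - destruct (segment_open_preimage A P Q s HA As) as [m [Hm Hball]].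
    destruct (Rle_lt_or_eq_dec s 1 Hs1) as [Hlt|Hs]; [exfalso | subst s; rewrite <- G1; auto].
    set (t := Rmin (s + m / 2) 1).
    assert (s < t) by (unfold t; apply Rmin_glb_lt; lra).
    assert (t <= 1) by apply Rmin_r. assert (t <= s + m / 2) by apply Rmin_l.
    assert (Et : E t).
    { split; [lra |]. intros u Hu. destruct (Rlt_le_dec u s); [apply Hbelow; lra |].
      apply Hball, Rabs_lt_between. lra. }
    apply Hub in Et. lra.
  - exfalso. destruct (segment_open_preimage B P Q s HB Bs) as [m [Hm Hball]].
    destruct (Rle_lt_or_eq_dec 0 s Hs0) as [Hlt|Hs].
    + set (u := Rmax (s - m / 2) 0).
      assert (u < s) by (unfold u; apply Rmax_lub_lt; lra).
      assert (0 <= u) by apply Rmax_r. assert (s - m / 2 <= u) by apply Rmax_l.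
      apply (Hdis (segment P Q u)); [apply HS; lra | apply Hbelow; lra |].
      apply Hball, Rabs_lt_between. lra.
    + subst s. apply (Hdis P); [rewrite <- G0; apply HS; lra | auto | rewrite <- G0; auto].
Qed.

Lemma below_graph_open (h : R -> R) p : (forall x, continuity_pt h x) ->
  snd p < h (fst p) -> exists e, 0 < e /\ forall q, dist p q < e -> snd q < h (fst q).
Proof.
  intros Hc Hp. set (a := h (fst p) - snd p).
  destruct (continuity_pt_eps h (fst p) (Hc _) (a / 2)) as [d [Hd Hx]]; [unfold a; lra |].
  exists (Rmin d (a / 2)). split; [apply Rmin_pos; unfold a; lra |].
  intros q Hq. pose proof (Rmin_l d (a / 2)). pose proof (Rmin_r d (a / 2)).
  pose proof (dist_fst_le p q). pose proof (dist_snd_le p q).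
  assert (Hh : Rabs (h (fst q) - h (fst p)) < a / 2) by (apply Hx; rewrite Rabs_minus_sym; lra).
  apply Rabs_lt_between in Hh. assert (Hy : Rabs (snd p - snd q) < a / 2) by lra.
  apply Rabs_lt_between in Hy. unfold a in *. lra.
Qed.

Lemma above_graph_open (h : R -> R) p : (forall x, continuity_pt h x) ->
  h (fst p) < snd p -> exists e, 0 < e /\ forall q, dist p q < e -> h (fst q) < snd q.
Proof.
  intros Hc Hp.
  destruct (below_graph_open (fun x => - h x) (fst p, - snd p)) as [e [He H]]; simpl; [| lra |].
  - intro x. apply continuity_pt_opp, Hc.
  - exists e. split; auto. intros q Hq.
    enough (- snd q < - h (fst q)) by lra.
    apply (H (fst q, - snd q)). unfold dist in *; cbn [fst snd].
    replace ((- snd p - - snd q) ^ 2) with ((snd p - snd q) ^ 2) by ring. exact Hq.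
Qed.

Section Subgraph.

Variable h : R -> R.
Hypothesis h_cont : forall x, continuity_pt h x.
Variable Om : pt -> Prop.
Hypothesis Om_iff : forall p, Om p <-> snd p < h (fst p).

Lemma subgraph_open : open_set Om.
Proof.
  intros p Hp. apply Om_iff in Hp.
  destruct (below_graph_open h p h_cont Hp) as [e [He H]].
  exists e. split; auto. intros q Hq. apply Om_iff. auto.
Qed.

Lemma subgraph_boundary p : boundary Om p <-> snd p = h (fst p).
Proof.
  split.
  - intro H. destruct (Rtotal_order (snd p) (h (fst p))) as [L|[Eq|L]]; auto; exfalso.
    + destruct (below_graph_open h p h_cont L) as [e [He Hq]].
      destruct (H e He) as [_ [q [Hq1 Hq2]]]. apply Hq1, Om_iff. auto.
    + destruct (above_graph_open h p h_cont L) as [e [He Hq]].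
      destruct (H e He) as [[q [Hq1 Hq2]] _]. apply Om_iff in Hq1. specialize (Hq q Hq2). lra.
  - intros Hp e He. split.
    + exists (fst p, snd p + - (e / 2)). split; [apply Om_iff; simpl; lra |].
      rewrite dist_vertical, Rabs_Ropp, Rabs_right; lra.
    + exists p. split; [rewrite Om_iff; lra |].
      unfold dist. replace ((fst p - fst p) ^ 2 + (snd p - snd p) ^ 2) with 0 by ring.
      rewrite sqrt_0. auto.
Qed.

Lemma vertical_segment_in_subgraph x a b : a < h x -> b < h x ->
  forall t, 0 <= t <= 1 -> Om (segment (x, a) (x, b) t).
Proof.
  intros Ha Hb t Ht. apply Om_iff. unfold segment; simpl.
  replace (x + t * (x - x)) with x by ring.
  assert (0 <= t * (h x - b)) by (apply Rmult_le_pos; lra).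
  assert (0 <= (1 - t) * (h x - a)) by (apply Rmult_le_pos; lra).
  destruct (Req_dec t 1) as [->|]; [lra |].
  assert (0 < (1 - t) * (h x - a)) by (apply Rmult_lt_0_compat; lra). nra.
Qed.

(* If h > m everywhere, every point of Om is joined inside Om to every other
   one by three segments: down to height m, along it, and up again. *)
Lemma subgraph_connected m : (forall x, m < h x) -> connected Om.
Proof.
  intros Hm A B HA HB Hcov Hdis.
  destruct (classic (exists p, Om p /\ A p)) as [[p [Sp Ap]]|N]; [right | left; eauto].
  intros q Sq Bq. apply (Hdis q Sq); auto.
  apply Om_iff in Sp. apply Om_iff in Sq.
  assert (A1 : A (fst p, m)).
  { apply (segment_same_piece Om A B (fst p, snd p)); auto; [| destruct p; auto].
    apply vertical_segment_in_subgraph; auto. }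
  assert (A2 : A (fst q, m)).
  { apply (segment_same_piece Om A B (fst p, m)); auto. intros t Ht. apply Om_iff.
    unfold segment; simpl. replace (m + t * (m - m)) with m by ring. auto. }
  destruct q as [x y]. apply (segment_same_piece Om A B (x, m)); auto.
  apply vertical_segment_in_subgraph; auto.
Qed.

Lemma subgraph_domain m : (forall x, m < h x) -> domain Om.
Proof.
  intro Hm. split; [apply subgraph_open | split; [apply (subgraph_connected m Hm) |]].
  exists (0, m). apply Om_iff. apply Hm.
Qed.

End Subgraph.

Fixpoint derivs_bounded (m : nat) (F : R -> R) : Prop :=
  (exists K, forall x, Rabs (F x) <= K) /\
  match m with O => True | S k => derivs_bounded k (Derive F) end.

Lemma derivs_bounded_bounded m F : derivs_bounded m F -> exists K, forall x, Rabs (F x) <= K.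
Proof. destruct m; intros [H _]; exact H. Qed.

Lemma derivs_bounded_const m c : derivs_bounded m (fun _ => c).
Proof.
  revert c; induction m as [|m IH]; intro c;
    (split; [exists (Rabs c); intro; apply Rle_refl |]); [exact I |].
  replace (Derive (fun _ : R => c)) with (fun _ : R => 0); [apply IH |].
  apply functional_extensionality. intro x. symmetry. apply Derive_const.
Qed.

Lemma continuous_on_affine_in_y (U : pt -> Prop) c F : (forall x, continuity_pt F x) ->
  continuous_on U (fun p => c * snd p - F (fst p)).
Proof.
  intros HF p _ eps Heps. set (Kc := Rabs c + 1).
  assert (HKc : 0 < Kc) by (unfold Kc; pose proof (Rabs_pos c); lra).
  destruct (continuity_pt_eps F (fst p) (HF _) (eps / 2)) as [d [Hd Hx]]; [lra |].
  exists (Rmin d (eps / (2 * Kc))).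
  split; [apply Rmin_pos; [auto | apply Rdiv_lt_0_compat; lra] |].
  intros q _ Hq. pose proof (Rmin_l d (eps / (2 * Kc))). pose proof (Rmin_r d (eps / (2 * Kc))).
  pose proof (dist_fst_le p q). pose proof (dist_snd_le p q).
  assert (HFq : Rabs (F (fst q) - F (fst p)) < eps / 2) by (apply Hx; rewrite Rabs_minus_sym; lra).
  assert (Hy : Kc * Rabs (snd q - snd p) <= eps / 2).
  { apply Rle_trans with (Kc * (eps / (2 * Kc))); [| right; field; lra].
    apply Rmult_le_compat_l; [lra |]. rewrite Rabs_minus_sym. lra. }
  replace (c * snd q - F (fst q) - (c * snd p - F (fst p)))
    with (c * (snd q - snd p) - (F (fst q) - F (fst p))) by ring.
  eapply Rle_lt_trans; [apply Rabs_triang |]. rewrite Rabs_Ropp, Rabs_mult.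
  assert (Rabs c * Rabs (snd q - snd p) <= Kc * Rabs (snd q - snd p))
    by (apply Rmult_le_compat_r; [apply Rabs_pos | unfold Kc; lra]).
  lra.
Qed.

Lemma bounded_on_affine_in_y (U : pt -> Prop) c F B K :
  (forall p, U p -> Rabs (snd p) <= B) -> (forall x, Rabs (F x) <= K) ->
  bounded_on U (fun p => c * snd p - F (fst p)).
Proof.
  intros HB HK. exists (Rabs c * B + K). intros p Hp.
  unfold Rminus. eapply Rle_trans; [apply Rabs_triang |].
  rewrite Rabs_mult, Rabs_Ropp. specialize (HK (fst p)).
  assert (Rabs c * Rabs (snd p) <= Rabs c * B)
    by (apply Rmult_le_compat_l; [apply Rabs_pos | auto]).
  lra.
Qed.

(* (x, y) |-> c y - F x with F smooth is C^m; its partial derivatives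
   -F'(x) and c are of the same form. *)
Lemma CmB_affine_in_y m : forall b (U : pt -> Prop) c F, smooth F ->
  (b = true -> exists B, forall p, U p -> Rabs (snd p) <= B) ->
  (b = true -> derivs_bounded m F) ->
  CmB b m U (fun p => c * snd p - F (fst p)).
Proof.
  induction m as [|m IH]; intros b U c F HF HU HFb;
    (split; [apply continuous_on_affine_in_y; intro x;
             eapply is_derive_continuity_pt, (smooth_Derive F HF) |]);
    (split; [intro Hb; destruct (HU Hb) as [B HB]; destruct (HFb Hb) as [[K HK] _];
             apply (bounded_on_affine_in_y U c F B K); auto |]); [exact I |].
  destruct (smooth_Derive F HF) as [HdF HF'].
  exists (fun p => 0 * snd p - Derive F (fst p)), (fun p => 0 * snd p - (fun _ => - c) (fst p)).
  split; [| split].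
  - intros p _. split; apply is_derive_Reals; cbn [fst snd].
    + auto_derive; [exists (Derive F (fst p)); apply HdF |].
      change (Derive (fun x => F x)) with (Derive F). ring.
    + auto_derive; [exact I | ring].
  - apply IH; auto. intro Hb. apply (HFb Hb).
  - apply (IH b U 0 (fun _ => - c)); auto;
      [intro; apply derivable_n_times_const | intro; apply derivs_bounded_const].
Qed.

Definition graph_defining_fun (h : R -> R) (p : pt) : R := snd p - h (fst p).

Definition graph_strip (h : R -> R) (p : pt) : Prop := Rabs (snd p - h (fst p)) < 1.

Section DefiningFunction.

Variable h : R -> R.
Hypothesis h_smooth : smooth h.
Variable Om : pt -> Prop.
Hypothesis Om_iff : forall p, Om p <-> snd p < h (fst p).

Lemma smooth_continuity_pt x : continuity_pt h x.
Proof. eapply is_derive_continuity_pt, (smooth_Derive h h_smooth). Qed.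

Lemma shift_continuity_pt e x : continuity_pt (fun t => h t + e) x.
Proof.
  apply continuity_pt_plus; [apply smooth_continuity_pt |].
  apply continuity_pt_const. intros ? ?. reflexivity.
Qed.

Lemma graph_defining_fun_CmB m b (U : pt -> Prop) :
  (b = true -> exists B, forall p, U p -> Rabs (snd p) <= B) ->
  (b = true -> derivs_bounded m h) -> CmB b m U (graph_defining_fun h).
Proof.
  intros HU Hh.
  replace (graph_defining_fun h) with (fun p => 1 * snd p - h (fst p))
    by (apply functional_extensionality; intro; unfold graph_defining_fun; ring).
  apply CmB_affine_in_y; auto.
Qed.

Lemma graph_defining_fun_neg p : graph_defining_fun h p < 0 <-> Om p.
Proof. rewrite Om_iff. unfold graph_defining_fun. split; intro; lra. Qed.

Lemma graph_defining_fun_partial_x p :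
  partial_x (graph_defining_fun h) p (- Derive h (fst p)).
Proof.
  apply is_derive_Reals. unfold graph_defining_fun; cbn [fst snd].
  auto_derive; [exists (Derive h (fst p)); apply (smooth_Derive h h_smooth) |].
  change (Derive (fun x => h x)) with (Derive h). ring.
Qed.

Lemma graph_defining_fun_partial_y p : partial_y (graph_defining_fun h) p 1.
Proof.
  apply is_derive_Reals. unfold graph_defining_fun; cbn [fst snd].
  auto_derive; [exact I | ring].
Qed.

Lemma graph_defining_fun_Cinf : defining_fun Cinf Om (fun _ => True) (graph_defining_fun h).
Proof.
  split; [intros p _; exists 1; split; [lra | auto] |].
  split; [auto |]. split; [intro m; apply graph_defining_fun_CmB; discriminate |].
  split; [intros p _; apply graph_defining_fun_neg |].
  intros p _. exists (- Derive h (fst p)), 1.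
  split; [apply graph_defining_fun_partial_x | split; [apply graph_defining_fun_partial_y | right; lra]].
Qed.

Lemma graph_strip_open : open_set (graph_strip h).
Proof.
  intros p Hp. unfold graph_strip in Hp. apply Rabs_lt_between in Hp.
  destruct (below_graph_open (fun t => h t + 1) p (shift_continuity_pt 1)) as [e1 [He1 H1]]; [lra |].
  destruct (above_graph_open (fun t => h t + -1) p (shift_continuity_pt (-1))) as [e2 [He2 H2]]; [lra |].
  exists (Rmin e1 e2). split; [apply Rmin_pos; auto |]. intros q Hq.
  pose proof (Rmin_l e1 e2). pose proof (Rmin_r e1 e2).
  specialize (H1 q ltac:(lra)). specialize (H2 q ltac:(lra)).
  apply Rabs_lt_between. lra.
Qed.

Lemma graph_strip_boundary q : boundary (graph_strip h) q -> Rabs (snd q - h (fst q)) = 1.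
Proof.
  intro H. destruct (Rtotal_order (Rabs (snd q - h (fst q))) 1) as [L|[E|L]]; auto; exfalso.
  - destruct (graph_strip_open q L) as [e [He Hq]].
    destruct (H e He) as [_ [r [Hr1 Hr2]]]. apply Hr1. auto.
  - assert (Hfar : exists e, 0 < e /\ forall r, dist q r < e -> ~ graph_strip h r).
    { unfold Rabs in L. destruct (Rcase_abs (snd q - h (fst q))) as [Hneg|Hpos].
      - destruct (below_graph_open (fun t => h t + -1) q (shift_continuity_pt (-1))) as [e [He Hr]]; [lra |].
        exists e. split; auto. intros r Hd Hs. specialize (Hr r Hd).
        apply Rabs_lt_between in Hs. lra.
      - destruct (above_graph_open (fun t => h t + 1) q (shift_continuity_pt 1)) as [e [He Hr]]; [lra |].
        exists e. split; auto. intros r Hd Hs. specialize (Hr r Hd).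
        apply Rabs_lt_between in Hs. lra. }
    destruct Hfar as [e [He Hfar]]. destruct (H e He) as [[r [Hr1 Hr2]] _].
    exact (Hfar r Hr2 Hr1).
Qed.

Lemma graph_strip_separation M : 0 <= M ->
  (forall a b, Rabs (h a - h b) <= M * Rabs (a - b)) ->
  forall p q, snd p = h (fst p) -> boundary (graph_strip h) q -> 1 / (M + 1) <= dist p q.
Proof.
  intros HM Hlip p q Hp Hq. apply graph_strip_boundary in Hq.
  pose proof (dist_fst_le p q). pose proof (dist_snd_le p q).
  assert (1 <= dist p q + M * dist p q).
  { rewrite <- Hq.
    replace (snd q - h (fst q)) with ((snd q - snd p) + (h (fst p) - h (fst q))) by (rewrite Hp; ring).
    eapply Rle_trans; [apply Rabs_triang |]. rewrite Rabs_minus_sym.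
    apply Rplus_le_compat; [lra |].
    eapply Rle_trans; [apply Hlip | apply Rmult_le_compat_l; lra]. }
  apply (Rmult_le_reg_r (M + 1)); [lra |].
  replace (1 / (M + 1) * (M + 1)) with 1 by (field; lra). lra.
Qed.

(* If h, h', ..., h^(m) are bounded (m >= 1), y - h(x) is a uniformly C^m
   defining function on the strip: y is bounded there, the strip has
   width >= 1/(M+1), and the gradient has vertical component 1. *)
Lemma graph_defining_fun_uniform m : (1 <= m)%nat -> derivs_bounded m h ->
  uniform_defining_fun m Om (graph_strip h) (graph_defining_fun h).
Proof.
  intros Hm Hb. destruct m as [|k]; [inversion Hm |].
  destruct Hb as [[M0 HM0] Hk]. destruct (derivs_bounded_bounded k _ Hk) as [M HM].
  assert (HM0' : 0 <= M) by (eapply Rle_trans; [apply Rabs_pos | apply (HM 0)]).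
  assert (Hy : exists B, forall p, graph_strip h p -> Rabs (snd p) <= B).
  { exists (M0 + 1). intros p Hp. unfold graph_strip in Hp. specialize (HM0 (fst p)).
    replace (snd p) with ((snd p - h (fst p)) + h (fst p)) by ring.
    eapply Rle_trans; [apply Rabs_triang | lra]. }
  assert (HCm : forall b, CmB b (S k) (graph_strip h) (graph_defining_fun h))
    by (intro b; apply graph_defining_fun_CmB; auto; intros _; split; [exists M0 | ]; auto).
  split; [| split; [| split]].
  - split; [apply graph_strip_open |]. split.
    + intros p Hp. apply (subgraph_boundary h smooth_continuity_pt Om Om_iff) in Hp.
      unfold graph_strip. rewrite Hp, Rminus_diag, Rabs_R0. lra.
    + split; [apply HCm |]. split; [intros p _; apply graph_defining_fun_neg |].
      intros p _. exists (- Derive h (fst p)), 1.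
      split; [apply graph_defining_fun_partial_x |].
      split; [apply graph_defining_fun_partial_y | right; lra].
  - exists (1 / (M + 1)). split; [apply Rdiv_lt_0_compat; lra |].
    intros p q Hp Hq. apply (graph_strip_separation M); auto.
    + apply (lipschitz_of_derive_bound h (Derive h)); auto. apply (smooth_Derive h h_smooth).
    + apply (subgraph_boundary h smooth_continuity_pt Om Om_iff), Hp.
  - apply HCm.
  - exists 1. split; [lra |]. intros p gx gy _ _ Hgy.
    assert (gy = 1) by (eapply derive_unique; [exact Hgy | apply graph_defining_fun_partial_y]).
    subst gy. rewrite <- sqrt_1 at 1. apply sqrt_le_1_alt.
    pose proof (pow2_ge_0 gx). lra.
Qed.

End DefiningFunction.

Lemma abs_lt_of_sq_lt a r : 0 < r -> a ^ 2 < r ^ 2 -> Rabs a < r.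
Proof. intros Hr H. apply Rabs_lt_between. nra. Qed.

Section Reach.

Variables h h1 h2 : R -> R.
Hypothesis h_derive : forall x, is_derive h x (h1 x).
Hypothesis h1_derive : forall x, is_derive h1 x (h2 x).
Variable M : R.
Hypothesis M_pos : 0 < M.
Hypothesis h1_bound : forall x, Rabs (h1 x) <= M.
Hypothesis h2_bound : forall x, Rabs (h2 x) <= M.
Variable Gr : pt -> Prop.
Hypothesis Gr_iff : forall p, Gr p <-> snd p = h (fst p).

Definition sq_dist_graph (x : pt) (t : R) : R := (fst x - t) ^ 2 + (snd x - h t) ^ 2.
Definition sq_dist_graph1 (x : pt) (t : R) : R := - 2 * (fst x - t) - 2 * (snd x - h t) * h1 t.
Definition sq_dist_graph2 (x : pt) (t : R) : R :=
  2 + 2 * h1 t * h1 t - 2 * (snd x - h t) * h2 t.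

Lemma sq_dist_graph_derive x t : is_derive (sq_dist_graph x) t (sq_dist_graph1 x t).
Proof.
  unfold sq_dist_graph, sq_dist_graph1. auto_derive; [exists (h1 t); auto |].
  replace (Derive (fun y => h y) t) with (h1 t) by (symmetry; apply is_derive_unique, h_derive).
  ring.
Qed.

Lemma sq_dist_graph1_derive x t : is_derive (sq_dist_graph1 x) t (sq_dist_graph2 x t).
Proof.
  unfold sq_dist_graph1, sq_dist_graph2.
  auto_derive; [repeat split; [exists (h1 t) | exists (h2 t)]; auto |].
  replace (Derive (fun y => h y) t) with (h1 t) by (symmetry; apply is_derive_unique, h_derive).
  replace (Derive (fun y => h1 y) t) with (h2 t) by (symmetry; apply is_derive_unique, h1_derive).
  ring.
Qed.

Lemma dist_graph_point x t : dist x (t, h t) = sqrt (sq_dist_graph x t).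
Proof. reflexivity. Qed.

(* The reach radius r = 1 / (2 (2M + 1) M): within 2r of a nearby graph
   point, the curvature term of the squared distance is at most 1/2. *)
Definition reach_radius : R := 1 / (2 * (2 * M + 1) * M).

Lemma reach_radius_pos : 0 < reach_radius.
Proof. unfold reach_radius. apply Rdiv_lt_0_compat; nra. Qed.

Lemma sq_dist_graph_convex x t1 c :
  Rabs (fst x - t1) < reach_radius -> Rabs (snd x - h t1) < reach_radius ->
  Rabs (t1 - c) <= 2 * reach_radius -> 1 <= sq_dist_graph2 x c.
Proof.
  intros Hx1 Hx2 Hc. pose proof reach_radius_pos.
  assert (L : Rabs (h t1 - h c) <= M * Rabs (t1 - c))
    by (apply (lipschitz_of_derive_bound h h1); auto).
  assert (G : Rabs (snd x - h c) <= reach_radius * (2 * M + 1)).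
  { replace (snd x - h c) with ((snd x - h t1) + (h t1 - h c)) by ring.
    eapply Rle_trans; [apply Rabs_triang |].
    assert (M * Rabs (t1 - c) <= M * (2 * reach_radius)) by (apply Rmult_le_compat_l; lra).
    lra. }
  assert (P : (snd x - h c) * h2 c <= reach_radius * (2 * M + 1) * M).
  { eapply Rle_trans; [apply Rle_abs |]. rewrite Rabs_mult.
    apply Rmult_le_compat; auto; apply Rabs_pos. }
  assert (Q : reach_radius * (2 * M + 1) * M = 1 / 2) by (unfold reach_radius; field; lra).
  unfold sq_dist_graph2. nra.
Qed.

(* Hence two distinct global minimizers of the squared distance cannot
   exist when the minimum is < r^2: the derivative would vanish at both,
   while it is strictly increasing in between. *)
Lemma nearest_graph_point_unique x t1 t2 : t1 < t2 ->
  (forall c, sq_dist_graph x t1 <= sq_dist_graph x c) ->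
  (forall c, sq_dist_graph x t2 <= sq_dist_graph x c) ->
  sq_dist_graph x t1 < reach_radius ^ 2 -> False.
Proof.
  intros Hlt H1 H2 Hr. pose proof reach_radius_pos.
  assert (Z1 : sq_dist_graph1 x t1 = 0)
    by (apply (derive_zero_at_minimum (sq_dist_graph x) t1); auto; apply sq_dist_graph_derive).
  assert (Z2 : sq_dist_graph1 x t2 = 0)
    by (apply (derive_zero_at_minimum (sq_dist_graph x) t2); auto; apply sq_dist_graph_derive).
  assert (E12 : sq_dist_graph x t2 = sq_dist_graph x t1) by (apply Rle_antisym; auto).
  unfold sq_dist_graph in Hr, E12.
  pose proof (pow2_ge_0 (snd x - h t1)). pose proof (pow2_ge_0 (snd x - h t2)).
  pose proof (pow2_ge_0 (fst x - t1)).
  assert (A1 : Rabs (fst x - t1) < reach_radius) by (apply abs_lt_of_sq_lt; lra).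
  assert (A2 : Rabs (fst x - t2) < reach_radius) by (apply abs_lt_of_sq_lt; lra).
  assert (B1 : Rabs (snd x - h t1) < reach_radius) by (apply abs_lt_of_sq_lt; lra).
  destruct (MVT_gen (sq_dist_graph1 x) t1 t2 (sq_dist_graph2 x)) as [c [Hc Hmvt]].
  - intros; apply sq_dist_graph1_derive.
  - intros; eapply is_derive_continuity_pt, sq_dist_graph1_derive.
  - rewrite Rmin_left, Rmax_right in Hc by lra. rewrite Z1, Z2 in Hmvt.
    assert (Hpc : 1 <= sq_dist_graph2 x c).
    { apply (sq_dist_graph_convex x t1); auto.
      apply Rabs_lt_between in A1, A2. rewrite Rabs_left1 by lra. lra. }
    nra.
Qed.

(* Points within r of the graph have a nearest graph point, at distance < r:
   minimize the squared distance over [x1 - r, x1 + r]; outside this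
   interval it is >= r^2. *)
Lemma nearest_graph_point_exists x y : snd y = h (fst y) -> dist y x < reach_radius ->
  exists ts, (forall c, sq_dist_graph x ts <= sq_dist_graph x c) /\
             sq_dist_graph x ts < reach_radius ^ 2.
Proof.
  intros Hy Hyx. set (r := reach_radius). pose proof reach_radius_pos as Hr. fold r in Hr.
  set (ph := sq_dist_graph x).
  destruct (continuity_ab_min ph (fst x - r) (fst x + r)) as [ts [Hts _]]; [lra | |].
  { intros c _. eapply is_derive_continuity_pt, sq_dist_graph_derive. }
  assert (Dy : ph (fst y) < r ^ 2).
  { rewrite dist_sym in Hyx. destruct y as [y1 y2]. simpl in Hy. subst y2.
    rewrite dist_graph_point in Hyx. fold r in Hyx. rewrite <- (sqrt_pow2 r) in Hyx by lra.
    apply sqrt_lt_0_alt in Hyx. exact Hyx. }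
  assert (Hfar : forall c, ~ fst x - r <= c <= fst x + r -> r ^ 2 <= ph c).
  { intros c Hc. unfold ph, sq_dist_graph. pose proof (pow2_ge_0 (snd x - h c)).
    assert (r < Rabs (fst x - c)).
    { apply Rnot_le_lt. intro Hle. apply Hc. apply Rabs_le_between' in Hle. lra. }
    pose proof (Rabs_pos (fst x - c)). rewrite <- (pow2_abs (fst x - c)). nra. }
  assert (Yin : fst x - r <= fst y <= fst x + r)
    by (apply NNPP; intro N; apply Hfar in N; lra).
  exists ts. split; [| apply Rle_lt_trans with (ph (fst y)); auto].
  intro c. destruct (classic (fst x - r <= c <= fst x + r)) as [Hc|Hc]; [auto |].
  apply Hfar in Hc. apply Rle_trans with (ph (fst y)); [auto | lra].
Qed.

Lemma graph_positive_reach : positive_reach Gr.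
Proof.
  exists reach_radius. split; [apply reach_radius_pos |].
  intros y Hy x Hyx. apply Gr_iff in Hy.
  destruct (nearest_graph_point_exists x y Hy Hyx) as [ts [Hmin Hsm]].
  assert (Hdist : forall z, Gr z -> dist x z = sqrt (sq_dist_graph x (fst z))).
  { intros [z1 z2] Hz. apply Gr_iff in Hz. simpl in Hz. subst z2. apply dist_graph_point. }
  exists (ts, h ts). split.
  - split; [apply Gr_iff; reflexivity |].
    intros z Hz. rewrite dist_graph_point, Hdist by auto. apply sqrt_le_1_alt, Hmin.
  - intros z [Hz Hzmin].
    assert (Hz' : forall c, sq_dist_graph x (fst z) <= sq_dist_graph x c).
    { intro c. specialize (Hzmin (c, h c) ltac:(apply Gr_iff; reflexivity)).
      rewrite Hdist, dist_graph_point in Hzmin by auto.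
      apply sqrt_le_0 in Hzmin; auto; unfold sq_dist_graph;
        pose proof (pow2_ge_0 (snd x - h c)); pose proof (pow2_ge_0 (fst x - c));
        pose proof (pow2_ge_0 (snd x - h (fst z))); pose proof (pow2_ge_0 (fst x - fst z)); lra. }
    destruct (Rtotal_order ts (fst z)) as [L|[E|L]].
    + exfalso. apply (nearest_graph_point_unique x ts (fst z)); auto.
    + apply Gr_iff in Hz. destruct z as [z1 z2]. simpl in Hz, E. subst. reflexivity.
    + exfalso. apply (nearest_graph_point_unique x (fst z) ts); auto.
      apply Rle_lt_trans with (sq_dist_graph x ts); auto.
Qed.

End Reach.

Lemma horizontal_increment_bound (F Fx : pt -> R) x u v a e :
  (forall s, Rmin x u <= s <= Rmax x u ->
     partial_x F (s, v) (Fx (s, v)) /\ Rabs (Fx (s, v) - a) < e) ->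
  Rabs (F (u, v) - F (x, v) - a * (u - x)) <= e * Rabs (u - x).
Proof.
  intro H. destruct (MVT_gen (fun s => F (s, v)) x u (fun s => Fx (s, v))) as [c [Hc Hm]].
  - intros s Hs. apply is_derive_Reals, (H s ltac:(lra)).
  - intros s Hs. eapply is_derive_continuity_pt, is_derive_Reals, (H s Hs).
  - replace (F (u, v) - F (x, v) - a * (u - x)) with ((Fx (c, v) - a) * (u - x)) by lra.
    rewrite Rabs_mult. apply Rmult_le_compat_r; [apply Rabs_pos |].
    left. apply (H c Hc).
Qed.

(* A function with partial derivatives on an open set, the x-derivative
   being continuous, is (Frechet) differentiable there: split the increment
   into a horizontal part, controlled by the mean value theorem and the
   continuity of F_x, and a vertical part, controlled by F_y. *)
Lemma differentiable_of_partials (U : pt -> Prop) (F Fx Fy : pt -> R) x y : open_set U ->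
  (forall p, U p -> partial_x F p (Fx p) /\ partial_y F p (Fy p)) ->
  continuous_on U Fx -> U (x, y) ->
  differentiable_pt_lim (fun u v => F (u, v)) x y (Fx (x, y)) (Fy (x, y)).
Proof.
  intros HU Hp HFx Hxy [eps Heps]; simpl.
  destruct (HU _ Hxy) as [e0 [He0 Hball]].
  destruct (HFx (x, y) Hxy (eps / 2)) as [d1 [Hd1 H1]]; [lra |].
  destruct (proj2 (Hp _ Hxy) (eps / 2)) as [d2 H2]; [lra |]. simpl in H2.
  set (d := Rmin (Rmin (e0 / 2) (d1 / 2)) d2).
  assert (d <= e0 / 2 /\ d <= d1 / 2 /\ d <= d2) as [Hde0 [Hdd1 Hdd2]].
  { unfold d. pose proof (Rmin_l (Rmin (e0 / 2) (d1 / 2)) d2).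
    pose proof (Rmin_r (Rmin (e0 / 2) (d1 / 2)) d2).
    pose proof (Rmin_l (e0 / 2) (d1 / 2)). pose proof (Rmin_r (e0 / 2) (d1 / 2)). lra. }
  assert (Hd : 0 < d) by (unfold d; repeat apply Rmin_pos; try lra; apply cond_pos).
  exists (mkposreal d Hd). simpl. intros u v Hu Hv.
  assert (P1 : Rabs (F (u, v) - F (x, v) - Fx (x, y) * (u - x)) <= eps / 2 * Rabs (u - x)).
  { apply (horizontal_increment_bound F Fx). intros s Hs.
    assert (Rabs (s - x) <= Rabs (u - x)).
    { unfold Rmin, Rmax in Hs. destruct (Rle_dec x u); apply Rabs_le_between;
        rewrite ?Rabs_right, ?Rabs_left1 by lra; lra. }
    assert (Hsv : dist (x, y) (s, v) < 2 * d).
    { eapply Rle_lt_trans; [apply dist_le_sum |]. simpl.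
      rewrite (Rabs_minus_sym x), (Rabs_minus_sym y). lra. }
    assert (U (s, v)) by (apply Hball; lra).
    split; [apply Hp; auto | apply H1; auto; lra]. }
  assert (P2 : Rabs (F (x, v) - F (x, y) - Fy (x, y) * (v - y)) <= eps / 2 * Rabs (v - y)).
  { destruct (Req_dec v y) as [->|E].
    - rewrite !Rminus_diag, Rmult_0_r, Rminus_0_r, Rabs_R0. lra.
    - specialize (H2 (v - y) ltac:(lra) ltac:(lra)). replace (y + (v - y)) with v in H2 by ring.
      replace (F (x, v) - F (x, y) - Fy (x, y) * (v - y))
        with (((F (x, v) - F (x, y)) / (v - y) - Fy (x, y)) * (v - y)) by (field; lra).
      rewrite Rabs_mult. apply Rmult_le_compat_r; [apply Rabs_pos | lra]. }
  replace (F (u, v) - F (x, y) - (Fx (x, y) * (u - x) + Fy (x, y) * (v - y))) with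
    ((F (u, v) - F (x, v) - Fx (x, y) * (u - x)) + (F (x, v) - F (x, y) - Fy (x, y) * (v - y)))
    by ring.
  eapply Rle_trans; [apply Rabs_triang |].
  pose proof (Rmax_l (Rabs (u - x)) (Rabs (v - y))). pose proof (Rmax_r (Rabs (u - x)) (Rabs (v - y))).
  assert (eps / 2 * Rabs (u - x) <= eps / 2 * Rmax (Rabs (u - x)) (Rabs (v - y)))
    by (apply Rmult_le_compat_l; lra).
  assert (eps / 2 * Rabs (v - y) <= eps / 2 * Rmax (Rabs (u - x)) (Rabs (v - y)))
    by (apply Rmult_le_compat_l; lra).
  lra.
Qed.

Lemma CmB_pred m b U f : CmB b (S m) U f -> CmB b m U f.
Proof.
  revert f; induction m as [|m IH]; intros f [Hc [Hb H]]; [repeat split; auto |].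
  split; [auto | split; [auto |]]. destruct H as [fx [fy [Hp [H1 H2]]]].
  exists fx, fy. split; [auto | split; apply IH; auto].
Qed.

Lemma normal_component_lower_bound a b k c M : 0 < c -> c <= sqrt (a ^ 2 + b ^ 2) ->
  a + b * k = 0 -> Rabs k <= M -> c ^ 2 / (1 + M ^ 2) <= b ^ 2.
Proof.
  intros Hc Hab Hk HM.
  assert (Hsq : c ^ 2 <= a ^ 2 + b ^ 2)
    by (apply sqrt_le_0; [nra | nra | rewrite sqrt_pow2; lra]).
  replace a with (- (b * k)) in Hsq by lra.
  assert (k ^ 2 <= M ^ 2) by (rewrite <- (pow2_abs k); pose proof (Rabs_pos k); nra).
  apply Rmult_le_reg_r with (1 + M ^ 2); [nra |].
  replace (c ^ 2 / (1 + M ^ 2) * (1 + M ^ 2)) with (c ^ 2) by (field; nra).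
  pose proof (pow2_ge_0 b). nra.
Qed.

Lemma derive_of_implicit_slope (A B k A' B' k' : R -> R) t :
  (forall s, is_derive A s (A' s)) -> (forall s, is_derive B s (B' s)) ->
  (forall s, is_derive k s (k' s)) -> (forall s, A s + B s * k s = 0) -> B t <> 0 ->
  k' t = - (A' t + B' t * k t) * / B t.
Proof.
  intros HA HB Hk H0 HBt.
  assert (D : is_derive (fun s => A s + B s * k s) t (A' t + (B' t * k t + B t * k' t)))
    by (apply is_derive_R_plus; [| apply is_derive_R_mult]; auto).
  assert (Z : A' t + (B' t * k t + B t * k' t) = 0).
  { rewrite <- (is_derive_unique _ _ _ D), <- (Derive_const 0 t).
    apply Derive_ext. exact H0. }
  field_simplify_eq; [lra | auto].
Qed.

Section NoUniformC3.

Variables h h1 h2 : R -> R.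
Hypothesis h_derive : forall x, is_derive h x (h1 x).
Hypothesis h1_derive : forall x, is_derive h1 x (h2 x).
Variable M : R.
Hypothesis h1_bound : forall x, Rabs (h1 x) <= M.
Hypothesis h2_bound : forall x, Rabs (h2 x) <= M.
Variable Om : pt -> Prop.
Hypothesis Om_iff : forall p, Om p <-> snd p < h (fst p).

Lemma h_continuity_pt x : continuity_pt h x.
Proof. eapply is_derive_continuity_pt, h_derive. Qed.

Lemma graph_trace_derive (U : pt -> Prop) (F Fx Fy : pt -> R) t : open_set U ->
  (forall p, U p -> partial_x F p (Fx p) /\ partial_y F p (Fy p)) ->
  continuous_on U Fx -> U (t, h t) ->
  is_derive (fun s => F (s, h s)) t (Fx (t, h t) + Fy (t, h t) * h1 t).
Proof.
  intros HU Hp HFx Ht. apply is_derive_Reals.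
  replace (Fx (t, h t) + Fy (t, h t) * h1 t) with (Fx (t, h t) * 1 + Fy (t, h t) * h1 t) by ring.
  apply (derivable_pt_lim_comp_2d (fun u v => F (u, v))).
  - apply (differentiable_of_partials U); auto.
  - apply derivable_pt_lim_id.
  - apply is_derive_Reals, h_derive.
Qed.

Lemma graph_trace_C1_bounded (U : pt -> Prop) F : open_set U -> (forall t, U (t, h t)) ->
  CmB true 1 U F -> C1_bounded (fun t => F (t, h t)).
Proof.
  intros HU HG [_ [HbF [Fx [Fy [Hp [[HcX [HbX _]] [_ [HbY _]]]]]]]].
  destruct (HbF eq_refl) as [K0 H0], (HbX eq_refl) as [K1 H1], (HbY eq_refl) as [K2 H2].
  assert (0 <= M) by (eapply Rle_trans; [apply Rabs_pos | apply (h1_bound 0)]).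
  assert (0 <= K2) by (eapply Rle_trans; [apply Rabs_pos | apply (H2 _ (HG 0))]).
  assert (0 <= K0) by (eapply Rle_trans; [apply Rabs_pos | apply (H0 _ (HG 0))]).
  assert (0 <= K1) by (eapply Rle_trans; [apply Rabs_pos | apply (H1 _ (HG 0))]).
  exists (fun t => Fx (t, h t) + Fy (t, h t) * h1 t), (K0 + K1 + K2 * M).
  split; [| split]; intro t.
  - apply (graph_trace_derive U F Fx Fy t); auto.
  - specialize (H0 _ (HG t)). nra.
  - eapply Rle_trans; [apply Rabs_triang |]. rewrite Rabs_mult.
    specialize (H1 _ (HG t)). specialize (H2 _ (HG t)).
    assert (Rabs (Fy (t, h t)) * Rabs (h1 t) <= K2 * M)
      by (apply Rmult_le_compat; auto; apply Rabs_pos).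
    lra.
Qed.

(* A continuous defining function vanishes on the graph: it is >= 0 there,
   and if it were > 0 it would stay > 0 at points just below the graph. *)
Lemma defining_fun_zero_on_graph (U : pt -> Prop) rho t : open_set U -> U (t, h t) ->
  continuous_on U rho -> (forall p, U p -> (rho p < 0 <-> Om p)) -> rho (t, h t) = 0.
Proof.
  intros HU HG Hc Hneg.
  destruct (Rtotal_order (rho (t, h t)) 0) as [L|[E|L]]; auto; exfalso.
  - apply Hneg, Om_iff in L; auto. simpl in L. lra.
  - destruct (Hc _ HG (rho (t, h t)) L) as [d [Hd Hq]].
    destruct (HU _ HG) as [e [He Hball]].
    set (s := Rmin d e / 2).
    assert (0 < s < d /\ s < e) as [[Hs Hsd] Hse]
      by (unfold s; pose proof (Rmin_pos d e Hd He); pose proof (Rmin_l d e);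
          pose proof (Rmin_r d e); lra).
    assert (Dq : dist (t, h t) (t, h t + - s) = s)
      by (rewrite (dist_vertical (t, h t)), Rabs_Ropp, Rabs_right; lra).
    assert (Uq : U (t, h t + - s)) by (apply Hball; lra).
    specialize (Hq _ Uq ltac:(lra)). apply Rabs_lt_between in Hq.
    assert (Oq : Om (t, h t + - s)) by (apply Om_iff; simpl; lra).
    apply Hneg in Oq; auto. lra.
Qed.

Lemma graph_trace_slope (U : pt -> Prop) rho fx fy : open_set U -> (forall t, U (t, h t)) ->
  (forall p, U p -> partial_x rho p (fx p) /\ partial_y rho p (fy p)) ->
  continuous_on U fx -> (forall t, rho (t, h t) = 0) ->
  forall t, fx (t, h t) + fy (t, h t) * h1 t = 0.
Proof.
  intros HU HG Hp Hfx H0 t. rewrite <- (Derive_const 0 t).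
  rewrite <- (is_derive_unique _ _ _ (graph_trace_derive U rho fx fy t HU Hp Hfx (HG t))).
  apply Derive_ext. intro s. apply H0.
Qed.

(* A uniformly C^3 defining function forces h'' to be Lipschitz:
   with A, B the partials of rho along the graph, rho(t, h t) = 0 gives
   A + B h' = 0, the gradient bound gives B^2 >= beta > 0, and then
   h'' = -(A' + B' h') / B is C^1-bounded. *)
Lemma uniform_C3_second_derivative_lipschitz U rho :
  uniform_defining_fun 3 Om U rho ->
  exists K, forall a b, Rabs (h2 a - h2 b) <= K * Rabs (a - b).
Proof.
  intros [[HUo [Hbd [_ [Hneg _]]]] [_ [HC [c [Hc Hgrad]]]]].
  assert (HG : forall t, U (t, h t))
    by (intro t; apply Hbd, (subgraph_boundary h h_continuity_pt Om Om_iff); reflexivity).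
  destruct HC as [Hcr [_ [fx [fy [Hp [Cfx Cfy]]]]]].
  pose proof (CmB_pred _ _ _ _ Cfx) as Cfx1. pose proof (CmB_pred _ _ _ _ Cfy) as Cfy1.
  destruct Cfx as [Hcfx [_ [fxx [fxy [Hpx [Cfxx Cfxy]]]]]].
  destruct Cfy as [_ [_ [fyx [fyy [Hpy [Cfyx Cfyy]]]]]].
  set (A := fun t => fx (t, h t)). set (B := fun t => fy (t, h t)).
  set (A' := fun t => fxx (t, h t) + fxy (t, h t) * h1 t).
  set (B' := fun t => fyx (t, h t) + fyy (t, h t) * h1 t).
  assert (HdA : forall t, is_derive A t (A' t))
    by (intro t; apply (graph_trace_derive U fx fxx fxy t); auto; apply Cfxx).
  assert (HdB : forall t, is_derive B t (B' t))
    by (intro t; apply (graph_trace_derive U fy fyx fyy t); auto; apply Cfyx).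
  assert (Hslope : forall t, A t + B t * h1 t = 0)
    by (apply (graph_trace_slope U rho); auto; intro; apply (defining_fun_zero_on_graph U); auto).
  set (beta := c ^ 2 / (1 + M ^ 2)).
  assert (Hbeta : 0 < beta) by (unfold beta; apply Rdiv_lt_0_compat; nra).
  assert (Hlow : forall t, beta <= B t ^ 2).
  { intro t. destruct (Hp _ (HG t)) as [Px Py].
    apply (normal_component_lower_bound (A t) (B t) (h1 t)); [| apply (Hgrad (t, h t)) | |]; auto. }
  assert (HBnz : forall t, B t <> 0)
    by (intros t E; specialize (Hlow t); rewrite E in Hlow; simpl in Hlow; lra).
  assert (Hh1 : C1_bounded h1) by (exists h2, M; auto).
  assert (Htr : forall F, CmB true 1 U F -> C1_bounded (fun t => F (t, h t)))
    by (intros; apply (graph_trace_C1_bounded U); auto).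
  assert (HB : C1_bounded B) by (apply Htr, Cfy1).
  assert (HA' : C1_bounded A')
    by (unfold A'; apply C1_bounded_plus; [| apply C1_bounded_mult]; auto).
  assert (HB' : C1_bounded B')
    by (unfold B'; apply C1_bounded_plus; [| apply C1_bounded_mult]; auto).
  assert (Hquot : C1_bounded (fun t => - (A' t + B' t * h1 t) * / B t)).
  { replace (fun t => - (A' t + B' t * h1 t) * / B t)
      with (fun t => -1 * (A' t + B' t * h1 t) * / B t)
      by (apply functional_extensionality; intro; ring).
    apply C1_bounded_mult; [| apply (C1_bounded_inv B beta); auto].
    apply C1_bounded_mult; [apply C1_bounded_const |].
    apply C1_bounded_plus; [| apply C1_bounded_mult]; auto. }
  destruct Hquot as [E' [K [HdE [_ HbE]]]]. exists K. intros a b.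
  rewrite (derive_of_implicit_slope A B h1 A' B' h2 a),
    (derive_of_implicit_slope A B h1 A' B' h2 b) by auto.
  apply (lipschitz_of_derive_bound (fun t => - (A' t + B' t * h1 t) * / B t) E'); auto.
Qed.

End NoUniformC3.

(* The profile g(x) = sin(x^2)/x^2, extended by g(0) = 1, written as the
   power series of sin(u)/u evaluated at u^2 = x^4. *)
Definition g (x : R) : R := PSeries sin_n (x ^ 4).
Definition g1 : R -> R := Derive g.
Definition g2 : R -> R := Derive g1.

Lemma CV_radius_sin_n : CV_radius sin_n = p_infty.
Proof.
  apply CV_radius_infinite_DAlembert; [apply sin_no_R0 |].
  apply is_lim_seq_Reals. apply Alembert_sin.
Qed.

Lemma smooth_g : smooth g.
Proof.
  intro n. apply (derivable_n_times_comp n (PSeries sin_n) (fun x => x * (x * (x * (x * 1))))).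
  - apply smooth_PSeries, CV_radius_sin_n.
  - repeat apply derivable_n_times_mult;
      first [apply derivable_n_times_id | apply derivable_n_times_const].
Qed.

Lemma g_0 : g 0 = 1.
Proof.
  unfold g. replace (0 ^ 4) with 0 by ring. rewrite PSeries_0. unfold sin_n. simpl. lra.
Qed.

Lemma g_nonzero x : x <> 0 -> g x = sin (x ^ 2) / x ^ 2.
Proof.
  intro Hx. unfold sin. destruct (exist_sin (Rsqr (x ^ 2))) as [l Hl].
  replace (g x) with l; [field; auto |].
  unfold g, PSeries. replace (x ^ 4) with (Rsqr (x ^ 2)) by (unfold Rsqr; ring).
  symmetry. apply is_series_unique, is_series_Reals. exact Hl.
Qed.

Lemma g_derive x : is_derive g x (g1 x).
Proof. apply (smooth_Derive g smooth_g). Qed.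

Lemma g1_derive x : is_derive g1 x (g2 x).
Proof. apply (smooth_Derive g1), (smooth_Derive g smooth_g). Qed.

Lemma g2_continuous x : continuity_pt g2 x.
Proof.
  pose proof (proj2 (smooth_Derive g1 (proj2 (smooth_Derive g smooth_g)))) as Hg2.
  eapply is_derive_continuity_pt. apply (smooth_Derive g2 Hg2).
Qed.

Definition g1_formula x := 2 * cos (x ^ 2) / x - 2 * sin (x ^ 2) / x ^ 3.
Definition g2_formula x :=
  -4 * sin (x ^ 2) - 6 * cos (x ^ 2) / x ^ 2 + 6 * sin (x ^ 2) / x ^ 4.

(* Side conditions of [auto_derive]: products of factors x <> 0 and 1. *)
Ltac nonzero_factors :=
  repeat first [ split | exact I | assumption | apply R1_neq_R0
               | apply Rmult_integral_contrapositive_currified ].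

Lemma is_derive_off_origin (f h : R -> R) x l : x <> 0 ->
  (forall t, t <> 0 -> f t = h t) -> is_derive f x l -> is_derive h x l.
Proof.
  intros Hx Hfh. apply is_derive_ext_loc.
  assert (Hp : 0 < Rabs x) by (apply Rabs_pos_lt; auto).
  exists (mkposreal _ Hp). intros t Ht. apply Hfh. intros ->.
  change (Rabs (0 - x) < Rabs x) in Ht. rewrite Rminus_0_l, Rabs_Ropp in Ht. lra.
Qed.

Lemma g1_nonzero x : x <> 0 -> g1 x = g1_formula x.
Proof.
  intro Hx. apply is_derive_unique.
  apply (is_derive_off_origin (fun t => sin (t ^ 2) / t ^ 2)); auto.
  - intros t Ht. symmetry. apply g_nonzero; auto.
  - unfold g1_formula. auto_derive; [nonzero_factors |].
    change (x * (x * 1)) with (x ^ 2). field. auto.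
Qed.

Lemma g2_nonzero x : x <> 0 -> g2 x = g2_formula x.
Proof.
  intro Hx. apply is_derive_unique.
  apply (is_derive_off_origin g1_formula); auto.
  - intros t Ht. symmetry. apply g1_nonzero; auto.
  - unfold g1_formula, g2_formula.
    auto_derive; [nonzero_factors |].
    change (x * (x * 1)) with (x ^ 2). field. auto.
Qed.

Lemma abs_div_pow_le_1 s x k : Rabs s <= 1 -> 1 <= Rabs x -> Rabs (s / x ^ k) <= 1.
Proof.
  intros Hs Hx. assert (Hx0 : x <> 0) by (intros ->; rewrite Rabs_R0 in Hx; lra).
  unfold Rdiv. rewrite Rabs_mult, Rabs_inv, <- RPow_abs.
  assert (1 <= Rabs x ^ k) by (apply pow_R1_Rle; auto).
  assert (/ Rabs x ^ k <= 1) by (rewrite <- Rinv_1; apply Rinv_le_contravar; lra).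
  assert (0 < / Rabs x ^ k) by (apply Rinv_0_lt_compat; lra).
  pose proof (Rabs_pos s). nra.
Qed.

Lemma abs_sin_le_1 x : Rabs (sin x) <= 1.
Proof. apply Rabs_le_between, SIN_bound. Qed.

Lemma abs_cos_le_1 x : Rabs (cos x) <= 1.
Proof. apply Rabs_le_between, COS_bound. Qed.

(* g, g' and g'' are bounded: continuous, and O(1) for |x| >= 1 by the
   closed forms. *)
Lemma g_bounded : exists M, forall x, Rabs (g x) <= M.
Proof.
  apply (bounded_of_bounded_at_infinity g 1).
  - intro x. eapply is_derive_continuity_pt, g_derive.
  - intros x Hx. assert (x <> 0) by (intros ->; rewrite Rabs_R0 in Hx; lra).
    rewrite g_nonzero; auto. apply abs_div_pow_le_1; auto. apply abs_sin_le_1.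
Qed.

Lemma g1_bounded : exists M, forall x, Rabs (g1 x) <= M.
Proof.
  apply (bounded_of_bounded_at_infinity g1 4).
  - intro x. eapply is_derive_continuity_pt, g1_derive.
  - intros x Hx. assert (x <> 0) by (intros ->; rewrite Rabs_R0 in Hx; lra).
    rewrite g1_nonzero; auto.
    replace (g1_formula x) with (2 * (cos (x ^ 2) / x ^ 1) - 2 * (sin (x ^ 2) / x ^ 3))
      by (unfold g1_formula; field; auto).
    pose proof (abs_div_pow_le_1 _ x 1 (abs_cos_le_1 (x ^ 2)) Hx) as T1.
    pose proof (abs_div_pow_le_1 _ x 3 (abs_sin_le_1 (x ^ 2)) Hx) as T3.
    apply Rabs_le_between in T1, T3. apply Rabs_le_between. lra.
Qed.

Lemma g2_bounded : exists M, forall x, Rabs (g2 x) <= M.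
Proof.
  apply (bounded_of_bounded_at_infinity g2 16).
  - exact g2_continuous.
  - intros x Hx. assert (x <> 0) by (intros ->; rewrite Rabs_R0 in Hx; lra).
    rewrite g2_nonzero; auto.
    replace (g2_formula x) with (-4 * (sin (x ^ 2) / x ^ 0) - 6 * (cos (x ^ 2) / x ^ 2)
                                 + 6 * (sin (x ^ 2) / x ^ 4))
      by (unfold g2_formula; field; auto).
    pose proof (abs_div_pow_le_1 _ x 0 (abs_sin_le_1 (x ^ 2)) Hx) as T0.
    pose proof (abs_div_pow_le_1 _ x 2 (abs_cos_le_1 (x ^ 2)) Hx) as T2.
    pose proof (abs_div_pow_le_1 _ x 4 (abs_sin_le_1 (x ^ 2)) Hx) as T4.
    apply Rabs_le_between in T0, T2, T4. apply Rabs_le_between. lra.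
Qed.

Lemma g2_sqrt u : 0 < u ->
  g2 (sqrt u) = -4 * sin u - 6 * cos u / u + 6 * sin u / u ^ 2.
Proof.
  intro Hu. rewrite g2_nonzero by (apply Rgt_not_eq, sqrt_lt_R0; lra).
  unfold g2_formula. replace (sqrt u ^ 4) with ((sqrt u ^ 2) ^ 2) by ring.
  rewrite pow2_sqrt by lra. reflexivity.
Qed.

(* The k-th point where sin u = 1 and cos u = 0. *)
Definition sin_peak (k : nat) : R := PI / 2 + 2 * INR k * PI.

Lemma g2_jump k : 2 <= g2 (sqrt (sin_peak k + PI)) - g2 (sqrt (sin_peak k)).
Proof.
  pose proof PI2_3_2. pose proof (pos_INR k).
  assert (Hu : 3 / 2 < sin_peak k) by (unfold sin_peak; nra).
  assert (Hs : sin (sin_peak k) = 1) by (unfold sin_peak; rewrite sin_period; apply sin_PI2).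
  assert (Hc : cos (sin_peak k) = 0) by (unfold sin_peak; rewrite cos_period; apply cos_PI2).
  rewrite !g2_sqrt by lra. rewrite neg_sin, neg_cos, Hs, Hc.
  set (u := sin_peak k) in *. set (v := u + PI).
  assert (6 / u ^ 2 <= 3) by (apply Rmult_le_reg_r with (u ^ 2); [nra | field_simplify; nra]).
  assert (6 / v ^ 2 <= 3) by (apply Rmult_le_reg_r with (v ^ 2); [unfold v; nra |
                                field_simplify; unfold v; nra]).
  replace (-4 * - (1) - 6 * - (0) / v + 6 * - (1) / v ^ 2
           - (-4 * 1 - 6 * 0 / u + 6 * 1 / u ^ 2)) with (8 - 6 / v ^ 2 - 6 / u ^ 2)
    by (field; split; unfold v; nra).
  lra.
Qed.

(* Hence g'' is not Lipschitz: the points of the jump get arbitrarily close. *)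
Lemma g2_not_lipschitz K : ~ (forall a b, Rabs (g2 a - g2 b) <= K * Rabs (a - b)).
Proof.
  intro HK. set (L := Rabs K + 1).
  assert (L1 : 1 <= L) by (unfold L; pose proof (Rabs_pos K); lra).
  destruct (INR_archimed 1 (L ^ 2)) as [k Hk]; [lra |]. rewrite Rmult_1_r in Hk.
  pose proof PI2_3_2. pose proof (pos_INR k).
  assert (Hu : 4 * L ^ 2 < sin_peak k) by (unfold sin_peak; nra).
  set (a := sqrt (sin_peak k)). set (b := sqrt (sin_peak k + PI)).
  assert (Ha2 : a ^ 2 = sin_peak k) by (apply pow2_sqrt; nra).
  assert (Hb2 : b ^ 2 = sin_peak k + PI) by (apply pow2_sqrt; nra).
  assert (Hb : 0 <= b) by apply sqrt_pos.
  assert (HaL : 2 * L < a) by (apply Rsqr_incrst_0; [unfold Rsqr | lra | apply sqrt_pos]; nra).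
  assert (Hab : (b - a) * (b + a) = PI) by nra.
  assert (Hba : 0 < b - a) by nra.
  assert (Lip : g2 b - g2 a <= L * (b - a)).
  { eapply Rle_trans; [apply Rle_abs | eapply Rle_trans; [apply HK |]].
    rewrite (Rabs_right (b - a)) by lra. apply Rmult_le_compat_r; [lra |].
    unfold L. pose proof (Rle_abs K). lra. }
  pose proof (g2_jump k) as Hjump. fold a b in Hjump.
  assert (L * (b - a) * (2 * L) < L * (b - a) * (b + a)) by (apply Rmult_lt_compat_l; nra).
  assert (L * (b - a) * (2 * L) < L * 4) by (pose proof PI_4; nra).
  nra.
Qed.

Lemma Omega2_iff p : Omega2 p <-> snd p < g (fst p).
Proof.
  destruct p as [x y]; unfold Omega2; simpl.
  destruct (Req_dec x 0) as [->|Hx].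
  - rewrite g_0. split; [intros [[H _]|[_ H]]; [lra | auto] | intro; right; auto].
  - rewrite g_nonzero by auto.
    split; [intros [[_ H]|[H _]]; [auto | lra] | intro; left; auto].
Qed.

Lemma g_continuity_pt x : continuity_pt g x.
Proof. eapply is_derive_continuity_pt, g_derive. Qed.

Lemma g_lower_bound : exists m, forall x, m < g x.
Proof.
  destruct g_bounded as [M HM]. exists (- M - 1). intro x.
  specialize (HM x). apply Rabs_le_between in HM. lra.
Qed.

Lemma g_derivs_bounded : derivs_bounded 2 g.
Proof.
  split; [exact g_bounded |]. split; [exact g1_bounded |]. split; [exact g2_bounded | exact I].
Qed.

Lemma g1_g2_bound : exists M, 0 < M /\ (forall x, Rabs (g1 x) <= M) /\ (forall x, Rabs (g2 x) <= M).
Proof.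
  destruct g1_bounded as [M1 H1], g2_bounded as [M2 H2].
  exists (Rmax 1 (Rmax M1 M2)).
  pose proof (Rmax_l 1 (Rmax M1 M2)). pose proof (Rmax_r 1 (Rmax M1 M2)).
  pose proof (Rmax_l M1 M2). pose proof (Rmax_r M1 M2).
  split; [lra | split; intro x; [specialize (H1 x) | specialize (H2 x)]; lra].
Qed.

Theorem mainTheorem8 :
  (domain Omega2 /\ exists U rho, defining_fun Cinf Omega2 U rho) /\
  (exists U rho, uniform_defining_fun 2 Omega2 U rho) /\
  positive_reach (boundary Omega2) /\
  ~ (exists U rho, uniform_defining_fun 3 Omega2 U rho).
Proof.
  destruct g_lower_bound as [m Hm].
  destruct g1_g2_bound as [M [HM [Hg1 Hg2]]].
  split; [split | split; [| split]].
  - exact (subgraph_domain g g_continuity_pt Omega2 Omega2_iff m Hm).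
  - exists (fun _ => True), (graph_defining_fun g).
    exact (graph_defining_fun_Cinf g smooth_g Omega2 Omega2_iff).
  - exists (graph_strip g), (graph_defining_fun g).
    exact (graph_defining_fun_uniform g smooth_g Omega2 Omega2_iff 2 (le_S _ _ (le_n 1))
             g_derivs_bounded).
  - apply (graph_positive_reach g g1 g2 g_derive g1_derive M HM Hg1 Hg2).
    exact (subgraph_boundary g g_continuity_pt Omega2 Omega2_iff).
  - intros [U [rho Hrho]].
    destruct (uniform_C3_second_derivative_lipschitz g g1 g2 g_derive g1_derive M Hg1 Hg2
                Omega2 Omega2_iff U rho Hrho) as [K HK].
    exact (g2_not_lipschitz K HK).
Qed.
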